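(* Let $G$ be a just infinite profinite group, and let $K$ and $L$ be normal subgroups of $G$ with $L < K$ such that $K/L$ is a chief factor of $G$. Then there is a critical pair $(A, A\cap L)$ in $G$ with $AL = K$. In particular $K/L \cong A/(A\cap L)$ and $C_G(K/L) = C_G(A/(A\cap L))$.
   Context: All groups are profinite, subgroups closed. A profinite group is \emph{just infinite} if it is infinite and every non-trivial closed normal subgroup has finite index. For normal subgroups $B<A$, $A/B$ is a \emph{chief factor} of $G$ if there is no normal subgroup of $G$ strictly between $B$ and $A$, and $(A,B)$ is a \emph{critical pair} if $B$ contains every normal subgroup of $G$ properly contained in $A$. $C_G(A/B) = \{g \in G: [g,a]\in B \ \forall a \in A\}$. *)

From Stdlib Require Import List.

Set Implicit Arguments.
Unset Strict Implicit.

Definition set_of (T : Type) := T -> Prop.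

Definition connected_in (T : Type) (op : set_of T -> Prop) (S : set_of T) :=
  ~ (exists U V : set_of T, op U /\ op V /\
       (forall x, S x -> U x \/ V x) /\
       (exists x, S x /\ U x) /\ (exists x, S x /\ V x) /\
       (forall x, S x -> U x -> V x -> False)).

Record profinite_group := ProfiniteGroup {
  pg_car :> Type;
  pg_mul : pg_car -> pg_car -> pg_car;
  pg_inv : pg_car -> pg_car;
  pg_one : pg_car;
  pg_mulA : forall x y z, pg_mul x (pg_mul y z) = pg_mul (pg_mul x y) z;
  pg_mul1g : forall x, pg_mul pg_one x = x;
  pg_mulVg : forall x, pg_mul (pg_inv x) x = pg_one;
  pg_open : set_of pg_car -> Prop;
  pg_open_setT : pg_open (fun _ => True);
  pg_open_setI : forall U V, pg_open U -> pg_open V ->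
                   pg_open (fun x => U x /\ V x);
  pg_open_bigU : forall (I : Type) (F : I -> set_of pg_car),
                   (forall i, pg_open (F i)) -> pg_open (fun x => exists i, F i x);
  pg_mul_cont : forall (U : set_of pg_car) x y, pg_open U -> U (pg_mul x y) ->
      exists V W, pg_open V /\ pg_open W /\ V x /\ W y /\
                  (forall v w, V v -> W w -> U (pg_mul v w));
  pg_inv_cont : forall U, pg_open U -> pg_open (fun x => U (pg_inv x));
  pg_hausdorff : forall x y, x <> y ->
      exists U V, pg_open U /\ pg_open V /\ U x /\ V y /\
                  (forall z, U z -> V z -> False);
  pg_compact : forall (I : Type) (F : I -> set_of pg_car),
      (forall i, pg_open (F i)) -> (forall x, exists i, F i x) ->
      exists l : list I, forall x, exists i, In i l /\ F i x;
  pg_totdisc : forall S : set_of pg_car, connected_in pg_open S ->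
      forall x y, S x -> S y -> x = y
}.

Arguments pg_mul {p} _ _.
Arguments pg_inv {p} _.
Arguments pg_one {p}.
Arguments pg_open {p} _.

Section Defs.
Variable G : profinite_group.
Implicit Types H K L A B : set_of G.

Definition is_closed H := pg_open (fun x => ~ H x).

Definition is_subgroup H :=
  H pg_one /\ (forall x y, H x -> H y -> H (pg_mul x y)) /\
  (forall x, H x -> H (pg_inv x)).

(* closed normal subgroup ("normal subgroup" in the paper: all subgroups are closed) *)
Definition closed_normal H :=
  is_closed H /\ is_subgroup H /\
  (forall g x, H x -> H (pg_mul (pg_inv g) (pg_mul x g))).

Definition subset H K := forall x, H x -> K x.
Definition proper_subset H K := subset H K /\ exists x, K x /\ ~ H x.
Definition setI H K : set_of G := fun x => H x /\ K x.
Definition setM H K : set_of G := fun x => exists h k, H h /\ K k /\ x = pg_mul h k.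
Definition set_eq H K := forall x, H x <-> K x.

Definition group_infinite := ~ exists l : list G, forall x : G, In x l.
Definition nontrivial H := exists x, H x /\ x <> pg_one.
Definition finite_index H :=
  exists l : list G, forall x, exists g, In g l /\ H (pg_mul (pg_inv g) x).

Definition just_infinite :=
  group_infinite /\
  forall N, closed_normal N -> nontrivial N -> finite_index N.

Definition chief_factor K L :=
  closed_normal K /\ closed_normal L /\ proper_subset L K /\
  ~ exists M, closed_normal M /\ proper_subset L M /\ proper_subset M K.

Definition critical_pair A B :=
  closed_normal A /\ closed_normal B /\ proper_subset B A /\
  forall N, closed_normal N -> proper_subset N A -> subset N B.

Definition commg (x y : G) : G :=
  pg_mul (pg_inv x) (pg_mul (pg_inv y) (pg_mul x y)).

Definition centraliser_factor A B : set_of G :=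
  fun g => forall a, A a -> B (commg g a).

(* abstract group isomorphism K1/L1 ~= K2/L2, given by a map f on coset
   representatives: well defined and injective, surjective, multiplicative *)
Definition factor_isomorphic K1 L1 K2 L2 :=
  exists f : G -> G,
    (forall x, K1 x -> K2 (f x)) /\
    (forall x y, K1 x -> K1 y ->
        (L1 (pg_mul x (pg_inv y)) <-> L2 (pg_mul (f x) (pg_inv (f y))))) /\
    (forall a, K2 a -> exists x, K1 x /\ L2 (pg_mul (f x) (pg_inv a))) /\
    (forall x y, K1 x -> K1 y ->
        L2 (pg_mul (f (pg_mul x y)) (pg_inv (pg_mul (f x) (f y))))).
End Defs.

From Stdlib Require Import List.
From mathcomp Require Import ssreflect ssrfun ssrbool.
From mathcomp Require boolp classical_sets.

(* By Zorn's lemma choose A minimal among the closed normal subgroups with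
   A L = K: the intersection of a chain of them still supplements L, because
   for k in K the closed sets A :&: k L form a chain of nonempty sets in the
   compact group G.  If N < A is closed normal, then N L is closed (L is open
   or trivial, G being just infinite) and normal with L <= N L <= K; minimality
   of A excludes N L = K, so the chief factor forces N L = L, i.e. N <= A :&: L.
   The remaining claims are the second isomorphism theorem
   K/L = A L/L ~ A/(A :&: L) and a commutator computation. *)

Set Implicit Arguments.
Unset Strict Implicit.

Declare Scope pg_scope.
Local Infix "*" := pg_mul : pg_scope.
Local Notation "x ^-1" := (pg_inv x) : pg_scope.
Local Notation "1" := pg_one : pg_scope.
Local Open Scope pg_scope.

Section GroupAlgebra.
Variable G : profinite_group.
Implicit Types x y : G.

Lemma mulgV x : x * x^-1 = 1.
Proof.
rewrite -[x * x^-1]pg_mul1g -{1}(pg_mulVg x^-1).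
by rewrite -pg_mulA (pg_mulA x^-1 x) pg_mulVg pg_mul1g pg_mulVg.
Qed.

Lemma mulg1 x : x * 1 = x.
Proof. by rewrite -(pg_mulVg x) pg_mulA mulgV pg_mul1g. Qed.

Lemma mulg_eq1_inv x y : x * y = 1 -> x = y^-1.
Proof. by move=> xy1; rewrite -[x]mulg1 -(mulgV y) pg_mulA xy1 pg_mul1g. Qed.

Lemma invgK x : x^-1^-1 = x.
Proof. by symmetry; apply: mulg_eq1_inv; rewrite mulgV. Qed.

Lemma invgM x y : (x * y)^-1 = y^-1 * x^-1.
Proof.
symmetry; apply: mulg_eq1_inv.
by rewrite pg_mulA -(pg_mulA y^-1) pg_mulVg mulg1 pg_mulVg.
Qed.

Lemma invg1 : (1 : G)^-1 = 1.
Proof. by symmetry; apply: mulg_eq1_inv; rewrite pg_mul1g. Qed.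

Lemma mulgVK x y : x * y^-1 * y = x.
Proof. by rewrite -pg_mulA pg_mulVg mulg1. Qed.

Lemma mulgKV x y : x * y * y^-1 = x.
Proof. by rewrite -pg_mulA mulgV mulg1. Qed.

End GroupAlgebra.

Ltac gsimpl := repeat first
  [ rewrite invgM | rewrite invgK | rewrite invg1 | rewrite pg_mulA
  | rewrite mulg1 | rewrite pg_mul1g | rewrite pg_mulVg | rewrite mulgV
  | rewrite mulgVK | rewrite mulgKV ].

Section Subgroups.
Variable G : profinite_group.
Implicit Types (x y g : G) (H N A K L : set_of G).

Definition normal_subgroup H :=
  is_subgroup H /\ forall g x, H x -> H (g^-1 * (x * g)).

Definition chain (C : set_of G -> Prop) :=
  forall A B, C A -> C B -> subset A B \/ subset B A.

Definition bigcap (C : set_of G -> Prop) : set_of G := fun x => forall A, C A -> A x.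

Section Subgroup.
Variable H : set_of G.
Hypothesis sH : is_subgroup H.

Lemma group1 : H 1. Proof. by case: sH. Qed.
Lemma groupM x y : H x -> H y -> H (x * y).
Proof. by case: sH => _ [mulH _]; apply: mulH. Qed.
Lemma groupV x : H x -> H x^-1. Proof. by case: sH => _ [_ invH]; apply: invH. Qed.

Lemma groupMr x y : H x -> H (y * x) -> H y.
Proof. by move=> Hx Hyx; rewrite -(mulgKV y x); apply: groupM => //; apply: groupV. Qed.

End Subgroup.

Lemma sub_setMl N H : is_subgroup H -> subset N (setM N H).
Proof. by move=> sH x Nx; exists x, 1; rewrite mulg1; do 2!split=> //; apply: group1. Qed.

Lemma sub_setMr N H : is_subgroup N -> subset H (setM N H).
Proof. by move=> sN x Hx; exists 1, x; rewrite pg_mul1g; split=> //; apply: group1. Qed.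

Lemma normalJ H g x : normal_subgroup H -> H x -> H (g * (x * g^-1)).
Proof. by case=> _ nH Hx; move: (nH g^-1 x Hx); rewrite invgK. Qed.

Lemma normal_subgroup_setI A L :
  normal_subgroup A -> normal_subgroup L -> normal_subgroup (setI A L).
Proof.
move=> [sA nA] [sL nL]; split; last by move=> g x [Ax Lx]; split; [apply: nA | apply: nL].
split; first by split; apply: group1.
split=> [x y [Ax Lx] [Ay Ly] | x [Ax Lx]]; split;
  by [apply: (groupM sA) | apply: (groupM sL) | apply: (groupV sA) | apply: (groupV sL)].
Qed.

Lemma normal_subgroup_setM N L :
  normal_subgroup N -> normal_subgroup L -> normal_subgroup (setM N L).
Proof.
move=> [sN nN] nsL; have [sL nL] := nsL; split; [split; [|split] |].
- by exists 1, 1; rewrite mulg1; split; [apply: group1 | split=> //; apply: group1].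
- move=> _ _ [n [l [Nn [Ll ->]]]] [n' [l' [Nn' [Ll' ->]]]].
  exists (n * n'), (n'^-1 * (l * n') * l'); split; first exact: (groupM sN).
  split; last by gsimpl.
  by apply: (groupM sL) => //; apply: nL.
- move=> _ [n [l [Nn [Ll ->]]]]; exists n^-1, (n * (l^-1 * n^-1)).
  split; first exact: (groupV sN).
  split; last by gsimpl.
  by apply: normalJ => //; apply: (groupV sL).
- move=> g _ [n [l [Nn [Ll ->]]]]; exists (g^-1 * (n * g)), (g^-1 * (l * g)).
  by split; [apply: nN | split; [apply: nL | gsimpl]].
Qed.

Lemma normal_subgroup_bigcap (C : set_of G -> Prop) :
  (forall A, C A -> normal_subgroup A) -> normal_subgroup (bigcap C).
Proof.
move=> nsC; split; [split; [|split] |].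
- by move=> A /nsC [sA _]; apply: group1.
- move=> x y Cx Cy A CA; have [sA _] := nsC A CA.
  by apply: (groupM sA); [apply: Cx | apply: Cy].
- by move=> x Cx A CA; have [sA _] := nsC A CA; apply: (groupV sA); apply: Cx.
- by move=> g x Cx A CA; have [_ nA] := nsC A CA; apply: nA; apply: Cx.
Qed.

End Subgroups.

Section Chains.
Variable G : profinite_group.
Implicit Types A B : set_of G.

Lemma chain_lower_bound_list (C : set_of G -> Prop) (s : list (set_of G)) A0 :
  chain C -> C A0 -> exists Am, C Am /\ forall A, In A s -> C A -> subset Am A.
Proof.
move=> chC CA0; elim: s => [|A s [Am [CAm Am_min]]]; first by exists A0.
case: (boolp.EM (C A)) => [CA | nCA]; last first.
  by exists Am; split=> // B [<- /nCA | sB] //; apply: Am_min.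
case: (chC Am A CAm CA) => [AmA | AAm].
- by exists Am; split=> // B [<- | sB] //; apply: Am_min.
- exists A; split=> // B [<- _ | sB CB] x Ax //.
  exact: Am_min _ sB CB x (AAm x Ax).
Qed.

Lemma Zorn_minimal (P : set_of G -> Prop) A0 :
  P A0 ->
  (forall C, (forall A, C A -> P A) -> (exists A, C A) -> chain C ->
     exists B, P B /\ forall A, C A -> subset B A) ->
  exists M, P M /\ forall N, P N -> subset N M -> subset M N.
Proof.
move=> PA0 chain_bound.
pose R (A B : {A | P A}) := boolp.asbool (subset (proj1_sig B) (proj1_sig A)).
have [|||[M PM] Mmin] := @classical_sets.ZL_preorder _ (exist _ A0 PA0) R.
- by move=> A; apply/boolp.asboolP.
- by move=> A B D /boolp.asboolP BA /boolp.asboolP DB; apply/boolp.asboolP => x /DB /BA.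
- move=> Cs totCs.
  case: (boolp.EM (exists s, Cs s)) => [[A1 CsA1] | noCs]; last first.
    by exists (exist _ A0 PA0) => A CsA; case: noCs; exists A.
  pose C B := exists s, Cs s /\ proj1_sig s = B.
  have [||| B [PB Bmin]] := chain_bound C.
  + by move=> _ [[A PA] [_ <-]].
  + by exists (proj1_sig A1), A1.
  + move=> _ _ [A [CsA <-]] [B [CsB <-]].
    by case: (totCs A B CsA CsB) => /boolp.asboolP; [right | left].
  + exists (exist _ B PB) => A CsA; apply/boolp.asboolP.
    exact: Bmin (ex_intro _ A (conj CsA erefl)).
- exists M; split=> // N PN NM.
  by apply/boolp.asboolP; apply: (Mmin (exist _ N PN)); apply/boolp.asboolP.
Qed.

End Chains.

Section Topology.
Variable G : profinite_group.
Implicit Types (x y g : G) (U V W A B H N F : set_of G).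

Lemma open_local V :
  (forall x, V x -> exists W, pg_open W /\ W x /\ subset W V) -> pg_open V.
Proof.
move=> locV; pose I := {W | pg_open W /\ subset W V}.
have -> : V = fun x => exists i : I, proj1_sig i x.
  apply: boolp.funext => x; apply: boolp.propext; split.
  - by move=> /locV [W [oW [Wx WV]]]; exists (exist _ W (conj oW WV)).
  - by case=> [[W [_ WV]] /= /WV].
by apply: pg_open_bigU => -[W []].
Qed.

Lemma open_ext U V : (forall x, U x <-> V x) -> pg_open U -> pg_open V.
Proof.
move=> UV oU; apply: open_local => x /UV Ux.
by exists U; split=> //; split=> // y /UV.
Qed.

Lemma open_translate U g : pg_open U -> pg_open (fun y => U (g * y)).
Proof.
move=> oU; apply: open_local => y Ugy.
have [V [W [_ [oW [Vg [Wy VW]]]]]] := pg_mul_cont oU Ugy.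
by exists W; split=> //; split=> // z Wz; apply: VW.
Qed.

Lemma closed_translate H g : is_closed H -> is_closed (fun y => H (g * y)).
Proof. exact: (open_translate (U := fun x => ~ H x)). Qed.

Lemma closed_setI A B : is_closed A -> is_closed B -> is_closed (setI A B).
Proof.
move=> clA clB; apply: open_local => x nABx.
case: (boolp.EM (A x)) => [Ax | nAx].
- exists (fun y => ~ B y); split; first exact: clB.
  by split=> [Bx | y nBy [_ By]] //; apply: nABx.
- by exists (fun y => ~ A y); split; [exact: clA | split=> // y nAy []].
Qed.

Lemma closed_bigcap (C : set_of G -> Prop) :
  (forall A, C A -> is_closed A) -> is_closed (bigcap C).
Proof.
move=> clC; apply: open_local => x nCx.
have [A /boolp.not_implyP [CA nAx]] := (boolp.existsNP _).2 nCx.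
by exists (fun y => ~ A y); split; [exact: clC | split=> // y nAy /(_ A CA)].
Qed.

Lemma closed_normal_bigcap (C : set_of G -> Prop) :
  (forall A, C A -> closed_normal A) -> closed_normal (bigcap C).
Proof.
move=> clnC; split; first by apply: closed_bigcap => A /clnC [].
by apply: normal_subgroup_bigcap => A /clnC [].
Qed.

Lemma closed_normal_setI A B :
  closed_normal A -> closed_normal B -> closed_normal (setI A B).
Proof.
move=> [clA nsA] [clB nsB]; split; first exact: closed_setI.
exact: normal_subgroup_setI.
Qed.

Lemma open_bigcap_list (I : Type) (s : list I) (U : I -> set_of G) :
  (forall i, pg_open (U i)) -> pg_open (fun x => forall i, In i s -> U i x).
Proof.
move=> oU; elim: s => [|i s IHs].
  apply: (open_ext (U := fun _ => True)); last exact: pg_open_setT.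
  by move=> x; split=> // _ i [].
apply: (open_ext (U := fun x => U i x /\ _)); last exact: pg_open_setI (oU i) IHs.
move=> x; split.
  by move=> [Uix Ux] j [<- | sj] //; apply: Ux.
by move=> Ux; split=> [|j sj]; apply: Ux; [left | right].
Qed.

(* The complement of H is the finite union of the closed cosets g H, g \notin H. *)
Lemma open_subgroup_of_finite_index H :
  is_subgroup H -> is_closed H -> finite_index H -> pg_open H.
Proof.
move=> sH clH [s cosetsH].
pose U g := fun x => ~ H g -> ~ H (g^-1 * x).
apply: (open_ext (U := fun x => forall g, In g s -> U g x)).
  move=> x; split=> [Ux | Hx g _ nHg Hgx].
  - have [g [sg Hgx]] := cosetsH x.
    case: (boolp.EM (H g)) => [Hg | nHg]; last by case: (Ux g sg nHg).
    have -> : x = g * (g^-1 * x) by gsimpl.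
    exact: (groupM sH).
  - by apply/nHg/(groupMr sH Hgx); gsimpl.
apply: open_bigcap_list => g; apply: open_local => x Ugx.
case: (boolp.EM (H g)) => [Hg | nHg].
- by exists (fun _ => True); split; [exact: pg_open_setT | split=> // y _ /(_ Hg)].
- exists (fun y => ~ H (g^-1 * y)); split; first exact: closed_translate.
  by split; [exact: Ugx | move=> y nHgy _].
Qed.

Lemma closed_setM_open N H : is_subgroup H -> pg_open H -> is_closed (setM N H).
Proof.
move=> sH oH; apply: open_local => x nNHx.
exists (fun y => H (x^-1 * y)); split; first exact: open_translate.
split; first by rewrite pg_mulVg; apply: group1.
move=> y Hxy [n [h [Nn [Hh yE]]]]; rewrite yE in Hxy; apply: nNHx.
exists n, (h * (x^-1 * (n * h))^-1); split=> //; split; last by gsimpl.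
by apply: (groupM sH) => //; apply: (groupV sH).
Qed.

Lemma chain_bigcap_meets (C : set_of G -> Prop) F :
  is_closed F -> (forall A, C A -> is_closed A) -> (exists A, C A) -> chain C ->
  (forall A, C A -> exists x, A x /\ F x) -> exists x, F x /\ bigcap C x.
Proof.
move=> clF clC [A0 CA0] chC meetC; apply: boolp.contrapT => noMeet.
pose U A := fun y => (C A /\ ~ A y) \/ ~ F y.
have oU A : pg_open (U A).
  apply: open_local => y [[CA nAy] | nFy].
  - by exists (fun z => ~ A z); split; [exact: clC | split=> // z nAz; left].
  - by exists (fun z => ~ F z); split=> //; split=> // z nFz; right.
have coverU y : exists A, U A y.
  case: (boolp.EM (F y)) => [Fy | nFy]; last by exists A0; right.
  have [A nCAy] : exists A, ~ (C A -> A y).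
    by apply/boolp.existsNP => capy; apply: noMeet; exists y.
  by exists A; left; apply/boolp.not_implyP.
have [s coverU_s] := pg_compact oU coverU.
have [Am [CAm Am_min]] := chain_lower_bound_list s chC CA0.
have [x [Amx Fx]] := meetC Am CAm.
have [A [sA [[CA nAx] | //]]] := coverU_s x.
exact/nAx/(Am_min A sA CA).
Qed.

(* In a just infinite group a nontrivial closed normal L has finite index,
   hence is open. *)
Lemma closed_normal_setM N L :
  just_infinite G -> closed_normal N -> closed_normal L -> closed_normal (setM N L).
Proof.
move=> [_ openL] [clN nsN] [clL nsL]; split; last exact: normal_subgroup_setM.
have [sL _] := nsL.
case: (boolp.EM (nontrivial L)) => [ntL | trivL].
  apply: (closed_setM_open _ sL); apply: (open_subgroup_of_finite_index sL clL).
  exact: openL (conj clL nsL) ntL.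
apply: (open_ext (U := fun x => ~ N x)) clN => x; split=> [nNx [n [l [Nn [Ll xE]]]] | ].
  have l1 : l = 1 by apply: boolp.contrapT => nl1; apply: trivL; exists l.
  by apply: nNx; rewrite xE l1 mulg1.
by move=> nNLx Nx; apply: nNLx; apply: (sub_setMl sL).
Qed.

End Topology.

Section SecondIsomorphism.
Variable G : profinite_group.
Variables A K L : set_of G.
Hypotheses (sA : is_subgroup A) (sK : is_subgroup K) (nsL : normal_subgroup L).
Hypothesis AL_K : set_eq (setM A L) K.

Lemma supplement_sub : subset A K.
Proof. by move=> a Aa; apply/AL_K; apply: (sub_setMl (proj1 nsL)). Qed.

(* The isomorphism sends x = a l (a in A, l in L) to its component a. *)
Lemma factor_isomorphic_supplement : factor_isomorphic K L A (setI A L).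
Proof.
have [sL nL] := nsL.
have [f fP] : {f : G -> G & forall x, K x -> A (f x) /\ L ((f x)^-1 * x)}.
  apply: (@boolp.choice _ _ (fun x a => K x -> A a /\ L (a^-1 * x))) => x.
  case: (boolp.EM (K x)) => [/AL_K [a [l [Aa [Ll ->]]]] | nKx].
  - by exists a => _; split=> //; gsimpl.
  - by exists 1 => /nKx.
have fA x : K x -> A (f x) by move=> /fP [].
have fL x : K x -> L ((f x)^-1 * x) by move=> /fP [].
have fLr x : K x -> L (f x * x^-1).
  move=> Kx; have -> : f x * x^-1 = f x * ((f x)^-1 * x)^-1 * (f x)^-1 by gsimpl.
  by rewrite -pg_mulA; apply: normalJ => //; apply: (groupV sL); apply: fL.
have fLl x : K x -> L (x * (f x)^-1).
  move=> Kx; have -> : x * (f x)^-1 = (f x * x^-1)^-1 by gsimpl.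
  by apply: (groupV sL); apply: fLr.
exists f; split=> //; split; [|split].
- move=> x y Kx Ky.
  have -> : x * y^-1
      = f x * (f y)^-1 * (f y * ((f x)^-1 * x * ((f y)^-1 * y)^-1) * (f y)^-1).
    by gsimpl.
  have Lw : L (f y * ((f x)^-1 * x * ((f y)^-1 * y)^-1) * (f y)^-1).
    rewrite -pg_mulA; apply: normalJ => //.
    by apply: (groupM sL); [apply: fL | apply: (groupV sL); apply: fL].
  split=> [LxyV | [_ Lf]]; last exact: (groupM sL).
  split; last exact: (groupMr sL Lw).
  by apply: (groupM sA); [apply: fA | apply: (groupV sA); apply: fA].
- move=> a Aa; have Ka := supplement_sub Aa; exists a; split=> //.
  by split; [apply: (groupM sA); [apply: fA | apply: (groupV sA)] | apply: fLr].
- move=> x y Kx Ky; have Kxy := groupM sK Kx Ky; split.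
    apply: (groupM sA); first exact: fA.
    by apply: (groupV sA); apply: (groupM sA); apply: fA.
  have -> : f (x * y) * (f x * f y)^-1
      = f (x * y) * (x * y)^-1 * (x * ((y * (f y)^-1) * x^-1)) * (x * (f x)^-1).
    by gsimpl.
  apply: (groupM sL); last exact: fLl.
  apply: (groupM sL); first exact: fLr.
  by apply: normalJ => //; apply: fLl.
Qed.

Lemma centraliser_factor_supplement :
  (forall g a, A a -> A (g^-1 * (a * g))) ->
  set_eq (centraliser_factor K L) (centraliser_factor A (setI A L)).
Proof.
move=> nA g; rewrite /centraliser_factor /commg; have [sL nL] := nsL; split.
- move=> cKL a Aa; split; last exact/cKL/supplement_sub.
  have -> : g^-1 * (a^-1 * (g * a)) = g^-1 * (a^-1 * g) * a by gsimpl.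
  by apply: (groupM sA) => //; apply: nA; apply: (groupV sA).
- move=> cAL _ /AL_K [a [l [Aa [Ll ->]]]].
  have -> : g^-1 * ((a * l)^-1 * (g * (a * l)))
      = g^-1 * (l^-1 * g) * (g^-1 * (a^-1 * (g * a)) * l) by gsimpl.
  apply: (groupM sL); first by apply: nL; apply: (groupV sL).
  by apply: (groupM sL) => //; have [] := cAL a Aa.
Qed.

End SecondIsomorphism.

Section NormalSupplements.
Variable G : profinite_group.
Variables K L : set_of G.
Hypotheses (HK : closed_normal K) (HL : closed_normal L) (sLK : subset L K).

Definition normal_supplement A := closed_normal A /\ set_eq (setM A L) K.

Lemma normal_supplementT : normal_supplement K.
Proof.
have [_ [sK _]] := HK; have [_ [sL _]] := HL.
split=> // x; split=> [[k [l [Kk [Ll ->]]]] | ]; last exact: sub_setMl.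
by apply: (groupM sK) => //; apply: sLK.
Qed.

Lemma normal_supplement_bigcap (C : set_of G -> Prop) :
  (forall A, C A -> normal_supplement A) -> (exists A, C A) -> chain C ->
  normal_supplement (bigcap C).
Proof.
move=> supC [A1 CA1] chC; have [clL [sL _]] := HL.
split; first by apply: closed_normal_bigcap => A /supC [].
move=> k; split=> [[d [l [Cd [Ll ->]]]] | Kk].
  by apply/(proj2 (supC A1 CA1)); exists d, l; split; [apply: Cd | split].
have [||||| x [Lkx Cx]] := @chain_bigcap_meets _ C (fun y => L (k^-1 * y)).
- exact: closed_translate.
- by move=> A /supC [[]].
- by exists A1.
- exact: chC.
- move=> A /supC [_ AL_K]; have [a [l [Aa [Ll kE]]]] := proj2 (AL_K k) Kk.
  by exists a; split=> //; rewrite kE; gsimpl; apply: (groupV sL).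
exists x, (x^-1 * k); split=> //; split; last by gsimpl.
by rewrite -[k](invgK k) -invgM; apply: (groupV sL).
Qed.

Lemma exists_minimal_normal_supplement :
  exists M, normal_supplement M /\
    forall N, normal_supplement N -> subset N M -> subset M N.
Proof.
apply: (Zorn_minimal normal_supplementT) => C supC neC chC.
exists (bigcap C); split; first exact: normal_supplement_bigcap.
by move=> A CA x /(_ A CA).
Qed.

Hypothesis chiefKL :
  ~ exists M, closed_normal M /\ proper_subset L M /\ proper_subset M K.

Lemma chief_setM N :
  is_subgroup N -> subset N K -> closed_normal (setM N L) ->
  subset N L \/ set_eq (setM N L) K.
Proof.
move=> sN NK clnNL; have [_ [sK _]] := HK; have [_ [sL _]] := HL.
case: (boolp.EM (subset N L)) => [NL | nNL]; [by left | right].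
have [x /boolp.not_implyP [Nx nLx]] := (boolp.existsNP _).2 nNL.
have NL_K : subset (setM N L) K.
  by move=> _ [n [l [Nn [Ll ->]]]]; apply: (groupM sK); [apply: NK | apply: sLK].
move=> y; split=> [/NL_K // | Ky]; apply: boolp.contrapT => nNLy; apply: chiefKL.
exists (setM N L); split=> //; split; last by split=> //; exists y.
by split; [exact: sub_setMr | exists x; split=> //; exact: sub_setMl].
Qed.

Lemma minimal_normal_supplement_critical M :
  just_infinite G -> proper_subset L K -> normal_supplement M ->
  (forall N, normal_supplement N -> subset N M -> subset M N) ->
  critical_pair M (setI M L).
Proof.
move=> JI [_ [k [Kk nLk]]] [clnM ML_K] Mmin; have [_ [sL _]] := HL.
split=> //; split; first exact: closed_normal_setI.
split.
  split=> [x [] // | ]; have [a [l [Ma [Ll kE]]]] := proj2 (ML_K k) Kk.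
  by exists a; split=> // -[_ La]; apply: nLk; rewrite kE; apply: (groupM sL).
move=> N clnN [NM [y [My nNy]]] x Nx; split; first exact: NM.
have MK : subset M K := supplement_sub (proj2 HL) ML_K.
have [NL | NL_K] := chief_setM (proj1 (proj2 clnN)) (fun z Nz => MK z (NM z Nz))
                     (closed_normal_setM JI clnN HL); first exact: NL.
by case: nNy; apply: (Mmin N (conj clnN NL_K) NM).
Qed.

End NormalSupplements.

Theorem lemma11 (G : profinite_group) (K L : set_of G) :
  just_infinite G ->
  closed_normal K -> closed_normal L -> proper_subset L K ->
  chief_factor K L ->
  exists A : set_of G,
    critical_pair A (setI A L) /\ set_eq (setM A L) K /\
    factor_isomorphic K L A (setI A L) /\
    set_eq (centraliser_factor K L) (centraliser_factor A (setI A L)).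
Proof.
move=> JI HK HL ltLK [_ [_ [_ chiefKL]]].
have [M [supM Mmin]] := exists_minimal_normal_supplement HK HL (proj1 ltLK).
have [[_ [sM nM]] ML_K] := supM; have [_ [sK _]] := HK; have [_ nsL] := HL.
exists M; split.
  exact: (minimal_normal_supplement_critical HK HL (proj1 ltLK) chiefKL JI ltLK supM Mmin).
split=> //; split; first exact: (factor_isomorphic_supplement sM sK nsL ML_K).
exact: (centraliser_factor_supplement sM nsL ML_K nM).
Qed.
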